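(* Let $A,E\in\mathbb{R}^{n\times m}$, $\widetilde A=A+E$, $1\le r<\min\{n,m\}$, with full SVDs $A=U\Sigma V^T$ and $\widetilde A=\widetilde U\widetilde\Sigma\widetilde V^T$, and let $A_r=U_1\Sigma_1V_1^T$, $\widetilde A_r=\widetilde U_1\widetilde\Sigma_1\widetilde V_1^T$. Then \[A_r-\widetilde A_r=U\begin{pmatrix}-U_1^TE\widetilde V_1 & -U_1^TE\widetilde V_2\\ -U_2^TAV_2V_2^T\widetilde V_1 & 0\end{pmatrix}\widetilde V^T+U\begin{pmatrix}0 & U_1^T\widetilde U_2\widetilde U_2^T\widetilde A\widetilde V_2\\ -U_2^TE\widetilde V_1 & 0\end{pmatrix}\widetilde V^T.\]
   Context: In the full SVDs, $U,\widetilde U\in\mathbb{R}^{n\times n}$ and $V,\widetilde V\in\mathbb{R}^{m\times m}$ are orthogonal and the singular values are in nonincreasing order. $U=(U_1\ U_2)$, $\widetilde U=(\widetilde U_1\ \widetilde U_2)$ with $U_1,\widetilde U_1\in\mathbb{R}^{n\times r}$; $V=(V_1\ V_2)$, $\widetilde V=(\widetilde V_1\ \widetilde V_2)$ with $V_1,\widetilde V_1\in\mathbb{R}^{m\times r}$; $\Sigma_1,\widetilde\Sigma_1$ are the $r\times r$ diagonal matrices of the $r$ largest singular values of $A$ and $\widetilde A$. *)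

From mathcomp Require Import all_boot all_order all_algebra.
From mathcomp Require Import all_reals.
Set Implicit Arguments. Unset Strict Implicit. Unset Printing Implicit Defensive.
Import Order.TTheory GRing.Theory Num.Theory.
Local Open Scope ring_scope.

Definition orthogonal_mx (R : realType) (k : nat) (Q : 'M[R]_k) : Prop :=
  Q^T *m Q = 1%:M.

Definition svd_sigma (R : realType) (k l : nat) (S : 'M[R]_(k, l)) : Prop :=
  [/\ forall (i : 'I_k) (j : 'I_l), (i : nat) <> j -> S i j = 0,
      forall (i : 'I_k) (j : 'I_l), (i : nat) = j -> 0 <= S i j
    & forall (i i' : 'I_k) (j j' : 'I_l),
        (i : nat) = j -> (i' : nat) = j' -> (i <= i')%N -> S i' j' <= S i j].

Definition is_full_svd (R : realType) (k l : nat) (M : 'M[R]_(k, l))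
  (Q : 'M[R]_k) (S : 'M[R]_(k, l)) (P : 'M[R]_l) : Prop :=
  [/\ orthogonal_mx Q, orthogonal_mx P, svd_sigma S & M = Q *m S *m P^T].

(* Both truncations are orthogonal projections of their matrix,
   A_r = U1 U1^T A and At_r = At Vt1 Vt1^T, so U1^T A_r = U1^T A, U2^T A_r = 0,
   At_r Vt1 = At Vt1 and At_r Vt2 = 0.  Conjugating A_r - At_r by U and Vt
   splits it into four blocks, each of which then reduces to At = A + E; the
   projections V2 V2^T and Ut2 Ut2^T on the right-hand side disappear because
   A maps span V2 into span U2 and At maps span Vt2 into span Ut2. *)

From mathcomp Require Import all_boot all_order all_algebra.
From mathcomp Require Import all_reals.
From mathcomp Require Import zify.
Import Order.TTheory GRing.Theory Num.Theory.
Local Open Scope ring_scope.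
Set Implicit Arguments. Unset Strict Implicit.

Section ColumnBlocks.

Variable R : comPzRingType.

Lemma trmx_mul_orthogonal_hsubmx n a b (U : 'M[R]_(n, a + b)) :
  U^T *m U = 1%:M ->
  [/\ (lsubmx U)^T *m lsubmx U = 1%:M, (lsubmx U)^T *m rsubmx U = 0,
      (rsubmx U)^T *m lsubmx U = 0 & (rsubmx U)^T *m rsubmx U = 1%:M].
Proof.
rewrite -{1 2}[U](hsubmxK U) tr_row_mx mul_col_row scalar_mx_block.
by case/eq_block_mx.
Qed.

Lemma mul_tr_row_mx_row_mx n m a b c d (U1 : 'M[R]_(n, a)) (U2 : 'M_(n, b))
    (X : 'M_(n, m)) (W1 : 'M_(m, c)) (W2 : 'M_(m, d)) :
  (row_mx U1 U2)^T *m X *m row_mx W1 W2 =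
  block_mx (U1^T *m X *m W1) (U1^T *m X *m W2)
           (U2^T *m X *m W1) (U2^T *m X *m W2).
Proof. by rewrite tr_row_mx mul_col_mx mul_col_row. Qed.

Lemma orthogonal_conjK n m (U : 'M[R]_n) (W : 'M[R]_m) (X : 'M_(n, m)) :
  U^T *m U = 1%:M -> W^T *m W = 1%:M -> U *m (U^T *m X *m W) *m W^T = X.
Proof.
move=> /mulmx1C hU /mulmx1C hW.
by rewrite !mulmxA hU mul1mx -mulmxA hW mulmx1.
Qed.

Lemma orthogonal_split_proj n m a b c d (A : 'M[R]_(n, m))
    (P : 'M_(n, a)) (P' : 'M_(n, b)) (Q : 'M_(m, c)) (Q' : 'M_(m, d))
    (D : 'M_(a, c)) (D' : 'M_(b, d)) :
  P^T *m P = 1%:M -> P^T *m P' = 0 -> Q^T *m Q = 1%:M -> Q^T *m Q' = 0 ->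
  A = P *m D *m Q^T + P' *m D' *m Q'^T ->
  P *m P^T *m A = P *m D *m Q^T /\ A *m Q *m Q^T = P *m D *m Q^T.
Proof.
move=> hP hPP' hQ hQQ' ->.
have hQ'Q : Q'^T *m Q = 0 by rewrite -[Q]trmxK -trmx_mul hQQ' trmx0.
split.
  by rewrite mulmxDr -!mulmxA !(mulmxA P^T) hP hPP' mul1mx !mul0mx mulmx0 addr0.
by rewrite !mulmxDl -!(mulmxA _ _ Q) hQ hQ'Q mulmx1 mulmx0 mul0mx addr0.
Qed.

End ColumnBlocks.

Lemma svd_sigma_offdiag0 (R : realType) r p q (S : 'M[R]_(r + p, r + q)) :
  svd_sigma S -> ursubmx S = 0 /\ dlsubmx S = 0.
Proof.
case=> hd _ _; split; apply/matrixP => i j; rewrite !mxE hd //=.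
  by move=> /= e; have := ltn_ord i; rewrite e; lia.
by move=> /= e; have := ltn_ord j; rewrite -e; lia.
Qed.

Section FullSVD.

Variables (R : realType) (r p q : nat) (A : 'M[R]_(r + p, r + q)).
Variables (U : 'M[R]_(r + p)) (S : 'M[R]_(r + p, r + q)) (V : 'M[R]_(r + q)).
Hypothesis hA : is_full_svd A U S V.

Lemma full_svd_split :
  A = lsubmx U *m ulsubmx S *m (lsubmx V)^T + rsubmx U *m drsubmx S *m (rsubmx V)^T.
Proof.
case: hA => _ _ /svd_sigma_offdiag0[S12 S21] ->.
rewrite -{1}[U](hsubmxK U) -{1}[S](submxK S) -{1}[V](hsubmxK V) S12 S21.
by rewrite mul_row_block tr_row_mx mul_row_col !mulmx0 addr0 add0r.
Qed.

Lemma full_svd_head_mul :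
  let H := lsubmx U *m ulsubmx S *m (lsubmx V)^T in
  [/\ (lsubmx U)^T *m H = (lsubmx U)^T *m A, (rsubmx U)^T *m H = 0,
      H *m lsubmx V = A *m lsubmx V & H *m rsubmx V = 0].
Proof.
move=> H; case: hA => hU hV _ _.
have [u11 u12 u21 _] := trmx_mul_orthogonal_hsubmx hU.
have [v11 v12 _ _] := trmx_mul_orthogonal_hsubmx hV.
have [hl hr] := orthogonal_split_proj u11 u12 v11 v12 full_svd_split.
split; rewrite /H.
- by rewrite -hl !mulmxA u11 mul1mx.
- by rewrite -hl !mulmxA u21 !mul0mx.
- by rewrite -hr -(mulmxA _ _ (lsubmx V)) v11 mulmx1.
- by rewrite -hr -(mulmxA _ _ (rsubmx V)) v12 mulmx0.
Qed.

Lemma full_svd_tail_mul :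
  (rsubmx U)^T *m A *m rsubmx V *m (rsubmx V)^T = (rsubmx U)^T *m A /\
  rsubmx U *m (rsubmx U)^T *m A *m rsubmx V = A *m rsubmx V.
Proof.
case: hA => hU hV _ _.
have [_ _ u21 u22] := trmx_mul_orthogonal_hsubmx hU.
have [_ _ v21 v22] := trmx_mul_orthogonal_hsubmx hV.
have hT : rsubmx U *m (rsubmx U)^T *m A = A *m rsubmx V *m (rsubmx V)^T.
  have hsplit := full_svd_split; rewrite addrC in hsplit.
  by have [-> ->] := orthogonal_split_proj u22 u21 v22 v21 hsplit.
split.
- by rewrite -!mulmxA (mulmxA A) -hT !mulmxA u22 mul1mx.
- by rewrite hT -(mulmxA _ _ (rsubmx V)) v22 mulmx1.
Qed.

End FullSVD.

Theorem lemma3p18 (R : realType) (r p q : nat)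
  (A E : 'M[R]_(r + p, r + q))
  (U Ut : 'M[R]_(r + p)) (V Vt : 'M[R]_(r + q)) (S St : 'M[R]_(r + p, r + q)) :
  (1 <= r)%N -> (0 < p)%N -> (0 < q)%N ->
  is_full_svd A U S V ->
  is_full_svd (A + E) Ut St Vt ->
  let At := A + E in
  let U1 := lsubmx U in let U2 := rsubmx U in
  let V1 := lsubmx V in let V2 := rsubmx V in
  let Ut1 := lsubmx Ut in let Ut2 := rsubmx Ut in
  let Vt1 := lsubmx Vt in let Vt2 := rsubmx Vt in
  let Ar := U1 *m ulsubmx S *m V1^T in
  let Atr := Ut1 *m ulsubmx St *m Vt1^T in
  Ar - Atr =
    U *m block_mx (- (U1^T *m E *m Vt1)) (- (U1^T *m E *m Vt2))
                  (- (U2^T *m A *m V2 *m V2^T *m Vt1)) 0 *m Vt^T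
  + U *m block_mx 0 (U1^T *m Ut2 *m Ut2^T *m At *m Vt2)
                  (- (U2^T *m E *m Vt1)) 0 *m Vt^T.
Proof.
move=> _ _ _ hA hAt At U1 U2 V1 V2 Ut1 Ut2 Vt1 Vt2 Ar Atr.
have [hU _ _ _] := hA; have [_ hVt _ _] := hAt.
have [U1Ar U2Ar _ _] := full_svd_head_mul hA.
have [_ _ AtrVt1 AtrVt2] := full_svd_head_mul hAt.
have [U2AV2 _] := full_svd_tail_mul hA.
have [_ Ut2AtVt2] := full_svd_tail_mul hAt; rewrite -!mulmxA in Ut2AtVt2.
rewrite -mulmxDl -mulmxDr add_block_mx -[Ar - Atr](orthogonal_conjK _ hU hVt).
rewrite -{2}[U](hsubmxK U) -{1}[Vt](hsubmxK Vt) mul_tr_row_mx_row_mx.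
congr (_ *m _ *m _); congr block_mx; rewrite mulmxBr mulmxBl.
- by rewrite U1Ar -mulmxA AtrVt1 mulmxA mulmxDr mulmxDl opprD addNKr addr0.
- rewrite U1Ar -(mulmxA _ Atr) AtrVt2 mulmx0 subr0 -!mulmxA Ut2AtVt2.
  by rewrite mulmxDl mulmxDr addrC addrK.
- rewrite U2Ar -(mulmxA _ Atr) AtrVt1 U2AV2 mul0mx sub0r.
  by rewrite mulmxA mulmxDr mulmxDl opprD.
- by rewrite U2Ar -(mulmxA _ Atr) AtrVt2 mul0mx mulmx0 subr0 addr0.
Qed.
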